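(* Fix $n\in\mathbb{N}$ and $s\in(0,1)$. Suppose that for every $i>2$ the jump kernels satisfy $\lambda_i|x-y|^{-1-2s}\le j_i^{(n)}(x,y)\le\Lambda_i|x-y|^{-1-2s}$ for all $n\ge0$ and all wires $\{x,y\}\in W_i^{(n)}$, with $0<\lambda_i\le\Lambda_i<\infty$, $\lim_{i\to\infty}\lambda_i/i^2=1$ and $\lim_{i\to\infty}\Lambda_i/i^2=1$. If $u$ is a continuous real function on $\overline{V}_{i_0}^*$ for some $i_0>2$, then $$\lim_{i\to\infty}\mathcal{E}_i^{(n)}(u|_{V_i^{(n)}})=2|u(0)-u(1)|^2.$$
   Context: Index graph: vertices $\mathbb{N}$; vertex $i$ has edges $e_{i,2i-2}$ to $2i-2$ (only if $i\ge2$), $e_{i,2i-1},e'_{i,2i-1}$ to $2i-1$, $e_{i,2i}$ to $2i$, weights $r_e>0$ with $r_{e_{i,2i-1}}=r_{e'_{i,2i-1}}$. For $e$ from $i$ to $j$, $\phi_e(x)=\frac{j}{2i}x+s_e$, $s_e=0$ for $e\in\{e_{i,2i-1},e_{i,2i}\}$, $s_e=\frac1{2i}$ for $e\in\{e_{i,2i-2},e'_{i,2i-1}\}$. $E_i^{(n)}$: paths $\sigma=e_1\cdots e_n$ of length $n$ from $i$; $\phi_\sigma=\phi_{e_1}\circ\cdots\circ\phi_{e_n}$, $\delta_\sigma=r_{e_1}\cdots r_{e_n}$. For $i>1$: $V_{i-}^{(n)}=\{k/(i2^n)\}_{k=0}^{2^n-1}$, $V_{i+}^{(n)}=\{1-k/(i2^n)\}_{k=0}^{2^n-1}$,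 $V_i^{(n)}=V_{i-}^{(n)}\cup V_{i+}^{(n)}$, $\overline{V}_i^*=[0,\frac1i]\cup[1-\frac1i,1]$ (so $V_i^{(n)}\subset\overline{V}_{i_0}^*$ for $i\ge i_0$). Wires $W_i^{(n)}=\{\{\phi_\sigma(0),\phi_\sigma(1)\}:\sigma\in E_i^{(n)}\}$ are all pairs $\{x,y\}$ with $x\in V_{i-}^{(n)},y\in V_{i+}^{(n)}$, each with a unique path $\sigma^{(n)}_{x,y}$. $\mu_i^{(n)}(x)=\frac1{i2^n}$. Kernel $j_i^{(n)}(x,y)=(\delta_{\sigma^{(n)}_{x,y}}\mu_i^{(n)}(x)\mu_i^{(n)}(y))^{-1}$ on wires, $0$ otherwise. $\mathcal{E}_i^{(n)}(v)=\sum_{x,y\in V_i^{(n)}}(v(x)-v(y))^2j_i^{(n)}(x,y)\mu_i^{(n)}(x)\mu_i^{(n)}(y)$ for $v:V_i^{(n)}\to\mathbb{R}$. *)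

From HB Require Import structures.
From mathcomp Require Import all_boot all_order all_algebra.
From mathcomp Require Import all_classical all_reals all_analysis.
Set Implicit Arguments. Unset Strict Implicit. Unset Printing Implicit Defensive.
Import Order.TTheory GRing.Theory Num.Theory.
Import numFieldNormedType.Exports.
Local Open Scope classical_set_scope.
Local Open Scope ring_scope.

(* Edges out of vertex i of the index graph are encoded by k : 'I_4:
   k = 0 : e_{i,2i-2}  (only meaningful for i >= 2)
   k = 1 : e_{i,2i-1}
   k = 2 : e'_{i,2i-1}
   k = 3 : e_{i,2i}                                                       *)
Definition e_2im2 : 'I_4 := @Ordinal 4 0 isT.
Definition e_2im1 : 'I_4 := @Ordinal 4 1 isT.
Definition e'_2im1 : 'I_4 := @Ordinal 4 2 isT.
Definition e_2i : 'I_4 := @Ordinal 4 3 isT.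

Definition tgt (i : nat) (k : 'I_4) : nat :=
  if (k : nat) == 0%N then (2 * i - 2)%N
  else if (k : nat) == 3%N then (2 * i)%N
  else (2 * i - 1)%N.

Section Graph.
Variable R : realType.

Definition shift (i : nat) (k : 'I_4) : R :=
  if ((k : nat) == 0%N) || ((k : nat) == 2%N) then ((2 * i)%N%:R)^-1 else 0.

Definition phi_edge (i : nat) (k : 'I_4) (x : R) : R :=
  (tgt i k)%:R / (2 * i)%N%:R * x + shift i k.

Fixpoint phi_path (i : nat) (s : seq 'I_4) (x : R) : R :=
  match s with
  | [::] => x
  | k :: s' => phi_edge i k (phi_path (tgt i k) s' x)
  end.

(* delta_sigma = r_{e_1} ... r_{e_n}; r i k is the weight of edge k out of i *)
Fixpoint delta_path (r : nat -> 'I_4 -> R) (i : nat) (s : seq 'I_4) : R :=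
  match s with
  | [::] => 1
  | k :: s' => r i k * delta_path r (tgt i k) s'
  end.

Definition V_minus (i n : nat) : seq R :=
  [seq (k%:R / (i * 2 ^ n)%N%:R) | k <- iota 0 (2 ^ n)].
Definition V_plus (i n : nat) : seq R :=
  [seq (1 - k%:R / (i * 2 ^ n)%N%:R) | k <- iota 0 (2 ^ n)].
Definition V_set (i n : nat) : seq R := V_minus i n ++ V_plus i n.

Definition Vbar_star (i : nat) : set R :=
  [set x | 0 <= x <= (i%:R)^-1] `|` [set x | 1 - (i%:R)^-1 <= x <= 1].

Definition mu (i n : nat) : R := ((i * 2 ^ n)%N%:R)^-1.

Definition is_wire_path (i : nat) (n : nat) (s : n.-tuple 'I_4) (x y : R) : bool :=
  ((phi_path i s 0 == x) && (phi_path i s 1 == y)) ||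
  ((phi_path i s 0 == y) && (phi_path i s 1 == x)).

Definition jker (r : nat -> 'I_4 -> R) (i n : nat) (x y : R) : R :=
  match [pick s : n.-tuple 'I_4 | is_wire_path i s x y] with
  | Some s => (delta_path r i s * mu i n * mu i n)^-1
  | None => 0
  end.

Definition energy (r : nat -> 'I_4 -> R) (i n : nat) (v : R -> R) : R :=
  \sum_(x <- V_set i n) \sum_(y <- V_set i n)
     (v x - v y) ^+ 2 * jker r i n x y * mu i n * mu i n.

End Graph.

From Pilot Require Import Defs.
From HB Require Import structures.
From mathcomp Require Import all_boot all_order all_algebra.
From mathcomp Require Import all_classical all_reals all_analysis.
From mathcomp Require Import ring lra zify.
Set Implicit Arguments.
Unset Strict Implicit.
Unset Printing Implicit Defensive.
Import Order.TTheory GRing.Theory Num.Theory.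
Import numFieldNormedType.Exports.
Local Open Scope classical_set_scope.
Local Open Scope ring_scope.

(* For i > 2 every wire of W_i^(n) joins a point a/(i 2^n) of V_{i-}^(n) to a point
   1 - b/(i 2^n) of V_{i+}^(n), and every such pair (a, b) is a wire, so the energy is twice
   a sum of 4^n cross terms.  The length of the wire (a, b) tends to 1 as i grows, so the
   kernel bounds squeeze j_i^(n) mu_i^(n) mu_i^(n) between (lam_i / i^2) 4^-n and
   (Lam_i / i^2) (1 + o(1)) 4^-n; both tend to 4^-n, and by continuity of u at 0 and 1
   each cross term tends to |u(0) - u(1)|^2 4^-n. *)

(* Each edge of a path contributes one binary digit to the index a of its left endpoint
   phi_sigma(0) = a/(i 2^n) and one to the index b of its right endpoint
   phi_sigma(1) = 1 - b/(i 2^n); the four edge types realize the four pairs of digits. *)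
Definition left_bit (k : 'I_4) : bool := ((k : nat) == 0%N) || ((k : nat) == 2%N).
Definition right_bit (k : 'I_4) : bool := ((k : nat) == 0%N) || ((k : nat) == 1%N).

Fixpoint left_rank (s : seq 'I_4) : nat :=
  if s is k :: s' then (left_rank s' + 2 ^ size s' * left_bit k)%N else 0%N.
Fixpoint right_rank (s : seq 'I_4) : nat :=
  if s is k :: s' then (right_rank s' + 2 ^ size s' * right_bit k)%N else 0%N.

Lemma tgt_ge2 i k : (2 <= i)%N -> (2 <= tgt i k)%N.
Proof. by rewrite /tgt; case: eqP => _; [|case: eqP => _]; lia. Qed.

Lemma tgt_bits i k : (0 < i)%N -> (tgt i k + left_bit k + right_bit k)%N = (2 * i)%N.
Proof. by case: k => [[|[|[|[|m]]]] hk] //=; rewrite /tgt /=; lia. Qed.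

Lemma left_rank_lt s : (left_rank s < 2 ^ size s)%N.
Proof. by elim: s => [|k s IH] //=; rewrite expnS; case: left_bit; lia. Qed.

Lemma right_rank_lt s : (right_rank s < 2 ^ size s)%N.
Proof. by elim: s => [|k s IH] //=; rewrite expnS; case: right_bit; lia. Qed.

Lemma exists_path_ranks n a b : (a < 2 ^ n)%N -> (b < 2 ^ n)%N ->
  exists sg : n.-tuple 'I_4, left_rank sg = a /\ right_rank sg = b.
Proof.
elim: n a b => [|n IH] a b ha hb; first by exists [tuple]; rewrite /=; split; lia.
rewrite expnS in ha hb.
have [k [lk rk]] : exists k, left_bit k = (2 ^ n <= a)%N /\ right_bit k = (2 ^ n <= b)%N.
  by case: (2 ^ n <= a)%N; case: (2 ^ n <= b)%N;
    [exists e_2im2 | exists e'_2im1 | exists e_2im1 | exists e_2i].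
have [sg [la rb]] : exists sg : n.-tuple 'I_4,
    left_rank sg = (a - 2 ^ n * (2 ^ n <= a))%N /\ right_rank sg = (b - 2 ^ n * (2 ^ n <= b))%N.
  by apply: IH; case: leqP; lia.
exists (cons_tuple k sg); rewrite /= size_tuple la rb lk rk.
by split; case: leqP; lia.
Qed.

Lemma ranks_sum_lt i n a b : (1 < i)%N -> (a < 2 ^ n)%N -> (b < 2 ^ n)%N ->
  (a + b < i * 2 ^ n)%N.
Proof. by move=> hi ha hb; nia. Qed.

Lemma cvg_within_near {T : Type} {X : topologicalType} (F : set_system T) {FF : Filter F}
    (A : set X) (f : T -> X) (x : X) :
  f @ F --> x -> (\forall t \near F, A (f t)) -> f @ F --> within A (nbhs x).
Proof. by move=> fx fA P /= /fx; apply: filterS2 fA => t At /(_ At). Qed.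

Section Energy.
Variable R : realType.

Lemma cvg_sum_seq {T : Type} (F : set_system T) {FF : Filter F} {J : eqType} (js : seq J)
    (f : J -> T -> R) (l : J -> R) :
  (forall j, j \in js -> f j @ F --> l j) ->
  (fun t => \sum_(j <- js) f j t) @ F --> \sum_(j <- js) l j.
Proof.
move=> fl; rewrite big_seq; under eq_cvg do rewrite big_seq.
by apply: cvg_big => //; exact: add_continuous.
Qed.

Lemma invn_cvg0 : (fun i : nat => (i%:R : R)^-1) @ \oo --> 0.
Proof. by rewrite -cvg_shiftS; exact: cvg_harmonic. Qed.

Lemma powR_between (d p : R) : 0 < d <= 1 -> -3 <= p <= 0 -> 1 <= d `^ p <= d ^- 3.
Proof.
move=> d01 /andP[p3 p0]; apply/andP; split.
  by rewrite -(powRr0 d); apply: ger_powR.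
rewrite -powR_invn; last by case/andP: d01 => /ltW.
exact: ger_powR.
Qed.

Lemma sum_iota2_const N (x : R) : (0 < N)%N ->
  \sum_(a <- iota 0 N) \sum_(b <- iota 0 N) x * (N%:R^-1) ^+ 2 = x.
Proof.
move=> N_gt0; have hN : N%:R != 0 :> R by rewrite pnatr_eq0 -lt0n.
rewrite !big_const_seq !count_predT size_iota !iter_addr_0.
by rewrite -mulrnA -[_ *+ (N * N)]mulr_natr natrM; field.
Qed.

Definition grid_pt (i n a : nat) : R := a%:R / (i * 2 ^ n)%N%:R.

Lemma grid_ptD i n a b : grid_pt i n (a + b) = grid_pt i n a + grid_pt i n b.
Proof. by rewrite /grid_pt natrD mulrDl. Qed.

Lemma grid_pt_ge0 i n a : 0 <= grid_pt i n a.
Proof. by rewrite divr_ge0 ?ler0n. Qed.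

Lemma grid_pt_lt1 i n a : (a < i * 2 ^ n)%N -> grid_pt i n a < 1.
Proof. by move=> h; rewrite ltr_pdivrMr ?mul1r ?ltr_nat ?ltr0n //; lia. Qed.

Lemma grid_pt_le_inv i0 i n a : (0 < i0)%N -> (i0 <= i)%N -> (a <= 2 ^ n)%N ->
  grid_pt i n a <= i0%:R^-1.
Proof.
move=> i0_gt0 le_i0i ha.
rewrite ler_pdivrMr ?ltr0n ?muln_gt0 ?expn_gt0 /=; last by lia.
by rewrite mulrC ler_pdivlMr ?ltr0n // -natrM ler_nat; nia.
Qed.

Lemma grid_pt_neq i n a b : (a + b < i * 2 ^ n)%N -> grid_pt i n a != 1 - grid_pt i n b.
Proof. by move=> h; rewrite eq_sym subr_eq -grid_ptD eq_sym (lt_eqF (grid_pt_lt1 h)). Qed.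

Lemma phi_edgeE i k (x : R) :
  phi_edge i k x = ((tgt i k)%:R * x + (left_bit k)%:R) / (2 * i)%N%:R.
Proof.
rewrite /phi_edge /Defs.shift /left_bit mulrDl mulrAC.
by case: ifP; rewrite ?mul1r ?mul0r.
Qed.

Lemma phi_edge_grid0 i k m c : (2 <= i)%N ->
  phi_edge i k (grid_pt (tgt i k) m c) = grid_pt i m.+1 (c + 2 ^ m * left_bit k).
Proof.
move=> hi; have hT : (tgt i k)%:R != 0 :> R.
  by rewrite pnatr_eq0 -lt0n; have := @tgt_ge2 i k hi; lia.
have hI : i%:R != 0 :> R by rewrite pnatr_eq0 -lt0n; lia.
rewrite phi_edgeE /grid_pt natrD expnS !natrM !natrX; field.
by rewrite hT hI expf_neq0 ?pnatr_eq0.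
Qed.

Lemma phi_edge_grid1 i k m c : (2 <= i)%N ->
  phi_edge i k (1 - grid_pt (tgt i k) m c) = 1 - grid_pt i m.+1 (c + 2 ^ m * right_bit k).
Proof.
move=> hi; have hT : (tgt i k)%:R != 0 :> R.
  by rewrite pnatr_eq0 -lt0n; have := @tgt_ge2 i k hi; lia.
have hI : i%:R != 0 :> R by rewrite pnatr_eq0 -lt0n; lia.
have hN : (2 ^ m)%:R != 0 :> R by rewrite pnatr_eq0 expn_eq0.
rewrite phi_edgeE.
have -> : (tgt i k)%:R * (1 - grid_pt (tgt i k) m c) = (tgt i k)%:R - c%:R / (2 ^ m)%:R.
  by rewrite /grid_pt natrM; field; rewrite hT hN.
have -> : (tgt i k)%:R = (2 * i)%N%:R - (left_bit k)%:R - (right_bit k)%:R :> R.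
  by rewrite -(@tgt_bits i k) ?natrD; [ring | lia].
rewrite /grid_pt natrD expnS !natrM !natrX; field.
by rewrite hI expf_neq0 ?pnatr_eq0.
Qed.

Lemma phi_path0 i s : (2 <= i)%N -> phi_path i s (0 : R) = grid_pt i (size s) (left_rank s).
Proof.
elim: s i => [|k s IH] i hi /=; first by rewrite /grid_pt mul0r.
by rewrite IH ?tgt_ge2 // phi_edge_grid0.
Qed.

Lemma phi_path1 i s : (2 <= i)%N -> phi_path i s (1 : R) = 1 - grid_pt i (size s) (right_rank s).
Proof.
elim: s i => [|k s IH] i hi /=; first by rewrite /grid_pt mul0r subr0.
by rewrite IH ?tgt_ge2 // phi_edge_grid1.
Qed.

Lemma jker_sym r i n (x y : R) : jker r i n x y = jker r i n y x.
Proof.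
rewrite /jker (@eq_pick _ _ (fun sg => is_wire_path i sg y x)) // => sg.
by rewrite /is_wire_path orbC.
Qed.

Lemma jker_eq0 r i n (x y : R) :
  (forall sg : n.-tuple 'I_4, ~~ is_wire_path i sg x y) -> jker r i n x y = 0.
Proof. by move=> nowire; rewrite /jker; case: pickP => // sg; rewrite (negbTE (nowire sg)). Qed.

Lemma jker_minus_minus r i n a a' : (1 < i)%N -> (a < 2 ^ n)%N -> (a' < 2 ^ n)%N ->
  jker r i n (grid_pt i n a) (grid_pt i n a') = 0.
Proof.
move=> hi ha ha'; apply: jker_eq0 => sg.
have hsg : (right_rank sg < 2 ^ n)%N by have := right_rank_lt sg; rewrite size_tuple.
rewrite /is_wire_path phi_path1 ?size_tuple //.
by rewrite !(eq_sym (1 - _)) !(negbTE (grid_pt_neq (ranks_sum_lt hi _ hsg))) ?andbF.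
Qed.

Lemma jker_plus_plus r i n b b' : (1 < i)%N -> (b < 2 ^ n)%N -> (b' < 2 ^ n)%N ->
  jker r i n (1 - grid_pt i n b) (1 - grid_pt i n b') = 0.
Proof.
move=> hi hb hb'; apply: jker_eq0 => sg.
have hsg : (left_rank sg < 2 ^ n)%N by have := left_rank_lt sg; rewrite size_tuple.
rewrite /is_wire_path phi_path0 ?size_tuple //.
by rewrite !(negbTE (grid_pt_neq (ranks_sum_lt hi hsg _))).
Qed.

Definition wire_energy r i n (u : R -> R) a b : R :=
  (u (grid_pt i n a) - u (1 - grid_pt i n b)) ^+ 2
  * jker r i n (grid_pt i n a) (1 - grid_pt i n b) * mu R i n * mu R i n.

Lemma energy_cross r i n u : (1 < i)%N ->
  energy r i n u =
  2 * \sum_(a <- iota 0 (2 ^ n)) \sum_(b <- iota 0 (2 ^ n)) wire_energy r i n u a b.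
Proof.
move=> hi.
pose F x y := (u x - u y) ^+ 2 * jker r i n x y * mu R i n * mu R i n.
have F_sym x y : F x y = F y x by rewrite /F jker_sym -sqrrN opprB.
have F_mm : \sum_(x <- V_minus R i n) \sum_(y <- V_minus R i n) F x y = 0.
  rewrite big_map big1_seq // => a /andP[_]; rewrite mem_iota add0n => /andP[_ ha].
  rewrite big_map big1_seq // => a' /andP[_]; rewrite mem_iota => /andP[_ ha'].
  by rewrite /F jker_minus_minus ?mulr0 ?mul0r.
have F_pp : \sum_(x <- V_plus R i n) \sum_(y <- V_plus R i n) F x y = 0.
  rewrite big_map big1_seq // => b /andP[_]; rewrite mem_iota add0n => /andP[_ hb].
  rewrite big_map big1_seq // => b' /andP[_]; rewrite mem_iota => /andP[_ hb'].
  by rewrite /F jker_plus_plus ?mulr0 ?mul0r.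
have -> : energy r i n u = \sum_(x <- V_set R i n) \sum_(y <- V_set R i n) F x y by [].
under eq_bigr do rewrite big_cat.
rewrite big_cat /= !big_split /= F_mm F_pp add0r addr0 [X in _ + X]exchange_big /=.
under [X in _ + X]eq_bigr do under eq_bigr do rewrite F_sym.
rewrite -mulr2n mulr_natl /V_minus /V_plus big_map.
by under eq_bigr do rewrite big_map.
Qed.

Lemma grid_pt_cvg0 n a : (fun i => grid_pt i n a) @ \oo --> 0.
Proof.
have -> : (fun i => grid_pt i n a) = (fun i => a%:R / (2 ^ n)%:R * i%:R^-1).
  by apply: funext => i; rewrite /grid_pt natrM invfM; ring.
by rewrite -(mulr0 (a%:R / (2 ^ n)%:R)); apply: cvgMl_tmp; exact: invn_cvg0.
Qed.

Lemma cvg_grid_diff (u : R -> R) i0 n a b : (0 < i0)%N -> {within Vbar_star i0, continuous u} ->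
  (a <= 2 ^ n)%N -> (b <= 2 ^ n)%N ->
  (fun i => u (grid_pt i n a) - u (1 - grid_pt i n b)) @ \oo --> u 0 - u 1.
Proof.
move=> i0_gt0 u_cont ha hb.
have u_within := (subspace_continuousP _ u).1 u_cont.
have small k : (k <= 2 ^ n)%N -> \forall i \near \oo, 0 <= grid_pt i n k <= i0%:R^-1.
  move=> hk; exists i0 => // i /= hi.
  by rewrite grid_pt_ge0 grid_pt_le_inv.
apply: cvgB.
- apply: (cvg_comp _ _ _ (u_within 0 _)); last by left; rewrite /= lexx invr_ge0 ler0n.
  apply: cvg_within_near; first exact: grid_pt_cvg0.
  by apply: filterS (small a ha) => i hi; left.
- apply: (cvg_comp _ _ _ (u_within 1 _)).
    apply: cvg_within_near.
      by rewrite -[X in _ --> X]subr0; apply: cvgB; [exact: cvg_cst | exact: grid_pt_cvg0].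
    apply: filterS (small b hb) => i /andP[h0 h1]; right => /=.
    by apply/andP; split; lra.
  by right; rewrite /= lexx andbT lerBlDr lerDl invr_ge0 ler0n.
Qed.

Section KernelBounds.
Variables (n : nat) (s : R) (r : nat -> 'I_4 -> R) (lam Lam : nat -> R).
Hypothesis s01 : 0 < s < 1.
Hypothesis lam_pos : forall i, (2 < i)%N -> 0 < lam i <= Lam i.
Hypothesis jker_bounds : forall (i m : nat) (sg : m.-tuple 'I_4), (2 < i)%N ->
  lam i * `|phi_path i sg 0 - phi_path i sg 1| `^ (-1 - 2 * s)
    <= jker r i m (phi_path i sg 0) (phi_path i sg 1)
  /\ jker r i m (phi_path i sg 0) (phi_path i sg 1)
    <= Lam i * `|phi_path i sg 0 - phi_path i sg 1| `^ (-1 - 2 * s).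
Hypothesis lam_cvg : (fun i : nat => lam i / (i%:R) ^+ 2) @ \oo --> (1 : R).
Hypothesis Lam_cvg : (fun i : nat => Lam i / (i%:R) ^+ 2) @ \oo --> (1 : R).

Lemma wire_weight_bounds i a b : (2 < i)%N -> (a < 2 ^ n)%N -> (b < 2 ^ n)%N ->
  lam i / i%:R ^+ 2 * ((2 ^ n)%:R^-1) ^+ 2
  <= jker r i n (grid_pt i n a) (1 - grid_pt i n b) * mu R i n * mu R i n
  <= Lam i / i%:R ^+ 2 * (1 - grid_pt i n (a + b)) ^- 3 * ((2 ^ n)%:R^-1) ^+ 2.
Proof.
move=> hi ha hb; set d := 1 - grid_pt i n (a + b).
have [sg [la rb]] := exists_path_ranks ha hb.
have /andP[lam_gt0 lam_le] := lam_pos hi.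
have [J_ge J_le] := jker_bounds sg hi.
rewrite phi_path0 ?phi_path1 1?ltnW // size_tuple la rb in J_ge J_le.
have sum_lt : (a + b < i * 2 ^ n)%N by apply: ranks_sum_lt => //; lia.
have d01 : 0 < d <= 1 by rewrite /d subr_gt0 grid_pt_lt1 //= lerBlDr lerDl grid_pt_ge0.
have dist_d : `|grid_pt i n a - (1 - grid_pt i n b)| = d.
  have -> : grid_pt i n a - (1 - grid_pt i n b) = - d by rewrite /d grid_ptD; ring.
  by rewrite normrN ger0_norm //; case/andP: d01 => /ltW.
rewrite dist_d in J_ge J_le.
have /andP[pow_ge1 pow_le3] : 1 <= d `^ (-1 - 2 * s) <= d ^- 3.
  by case/andP: s01 => s0 s1; apply: powR_between => //; apply/andP; split; lra.
have mu2_gt0 : 0 < mu R i n * mu R i n.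
  by rewrite mulr_gt0 // invr_gt0 ltr0n muln_gt0 expn_gt0 /=; lia.
have mu2E : mu R i n * mu R i n = (i%:R ^+ 2)^-1 * ((2 ^ n)%:R^-1) ^+ 2.
  by rewrite /mu natrM invfM -exprVn; ring.
have -> : lam i / i%:R ^+ 2 * ((2 ^ n)%:R^-1) ^+ 2 = lam i * (mu R i n * mu R i n).
  by rewrite mu2E; ring.
have -> : Lam i / i%:R ^+ 2 * d ^- 3 * ((2 ^ n)%:R^-1) ^+ 2
          = Lam i * d ^- 3 * (mu R i n * mu R i n) by rewrite mu2E; ring.
rewrite -mulrA !ler_pM2r //.
apply/andP; split.
- exact: le_trans (ler_peMr (ltW lam_gt0) pow_ge1) J_ge.
- by apply: le_trans J_le _; apply: ler_wpM2l pow_le3; apply: le_trans (ltW lam_gt0) lam_le.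
Qed.

Lemma cvg_wire_weight a b : (a < 2 ^ n)%N -> (b < 2 ^ n)%N ->
  (fun i => jker r i n (grid_pt i n a) (1 - grid_pt i n b) * mu R i n * mu R i n)
  @ \oo --> ((2 ^ n)%:R^-1 : R) ^+ 2.
Proof.
move=> ha hb.
have d_cvg : (fun i => 1 - grid_pt i n (a + b)) @ \oo --> (1 : R).
  by rewrite -[X in _ --> X]subr0; apply: cvgB; [exact: cvg_cst | exact: grid_pt_cvg0].
have d3_cvg : (fun i => (1 - grid_pt i n (a + b)) ^- 3) @ \oo --> (1 : R).
  move: (cvg_comp _ _ d_cvg (@exprn_continuous _ 3 1)).
  by rewrite expr1n => /(cvgV (oner_neq0 R)); rewrite invr1.
apply: (squeeze_cvgr (f := fun i => lam i / i%:R ^+ 2 * ((2 ^ n)%:R^-1) ^+ 2)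
                     (h := fun i => Lam i / i%:R ^+ 2 * (1 - grid_pt i n (a + b)) ^- 3
                                    * ((2 ^ n)%:R^-1) ^+ 2)).
- by exists 3%N => // i /= hi; apply: wire_weight_bounds.
- by apply: cvg_trans (cvgMr_tmp lam_cvg) _; rewrite mul1r.
- by apply: cvg_trans (cvgMr_tmp (cvgM Lam_cvg d3_cvg)) _; rewrite !mul1r.
Qed.

Lemma cvg_wire_energy (u : R -> R) i0 a b : (0 < i0)%N -> {within Vbar_star i0, continuous u} ->
  (a < 2 ^ n)%N -> (b < 2 ^ n)%N ->
  (fun i => wire_energy r i n u a b) @ \oo --> (u 0 - u 1) ^+ 2 * ((2 ^ n)%:R^-1) ^+ 2.
Proof.
move=> i0_gt0 u_cont ha hb.
have -> : (fun i => wire_energy r i n u a b) =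
    (fun i => (u (grid_pt i n a) - u (1 - grid_pt i n b)) ^+ 2
      * (jker r i n (grid_pt i n a) (1 - grid_pt i n b) * mu R i n * mu R i n)).
  by apply: funext => i; rewrite /wire_energy !mulrA.
apply: cvgM; last exact: cvg_wire_weight.
have diff_cvg := cvg_grid_diff i0_gt0 u_cont (ltnW ha) (ltnW hb).
exact: (cvg_comp _ _ diff_cvg (@exprn_continuous _ 2 _)).
Qed.

End KernelBounds.

End Energy.

Theorem lemma6p3 (R : realType) (n : nat) (s : R)
  (r : nat -> 'I_4 -> R) (lam Lam : nat -> R) (u : R -> R) (i0 : nat) :
  0 < s < 1 ->
  (forall i k, 0 < r i k) ->
  (forall i, r i e_2im1 = r i e'_2im1) ->
  (forall i, (2 < i)%N -> 0 < lam i <= Lam i) ->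
  (forall (i m : nat) (sg : m.-tuple 'I_4), (2 < i)%N ->
     lam i * `|phi_path i sg 0 - phi_path i sg 1| `^ (-1 - 2 * s)
       <= jker r i m (phi_path i sg 0) (phi_path i sg 1)
     /\ jker r i m (phi_path i sg 0) (phi_path i sg 1)
       <= Lam i * `|phi_path i sg 0 - phi_path i sg 1| `^ (-1 - 2 * s)) ->
  (fun i : nat => lam i / (i%:R) ^+ 2) @ \oo --> (1 : R) ->
  (fun i : nat => Lam i / (i%:R) ^+ 2) @ \oo --> (1 : R) ->
  (2 < i0)%N ->
  {within @Vbar_star R i0, continuous u} ->
  (fun i : nat => energy r i n u) @ \oo --> 2 * `|u 0 - u 1| ^+ 2.
Proof.
(* The weights r enter only through the kernel bounds. *)
move=> s01 _ _ lam_pos jker_bounds lam_cvg Lam_cvg i0_gt2 u_cont.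
have cross_cvg : (fun i => 2 * \sum_(a <- iota 0 (2 ^ n)) \sum_(b <- iota 0 (2 ^ n))
                          wire_energy r i n u a b)
    @ \oo --> 2 * \sum_(a <- iota 0 (2 ^ n)) \sum_(b <- iota 0 (2 ^ n))
         (u 0 - u 1) ^+ 2 * ((2 ^ n)%:R^-1) ^+ 2.
  apply: cvgMl_tmp; apply: cvg_sum_seq => a; rewrite mem_iota add0n => /andP[_ ha].
  apply: cvg_sum_seq => b; rewrite mem_iota add0n => /andP[_ hb].
  exact: (cvg_wire_energy s01 lam_pos jker_bounds lam_cvg Lam_cvg
            (ltnW (ltnW i0_gt2)) u_cont ha hb).
rewrite sum_iota2_const ?expn_gt0 // -real_normK ?num_real // in cross_cvg.
apply: cvg_trans cross_cvg; apply: near_eq_cvg.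
by exists 2%N => // i /= hi; rewrite energy_cross.
Qed.
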